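(* Let $G=([n],E)$ be any graph, $F$ the uniform distribution on $[0,1]$, and $p\in(0,1)$. Let $X\subseteq[0,1]^n$ be the set of vectors $\mathbf{x}$ such that for every $i$: $\sum_{j\in N(i)\cup\{i\}}x_j\ge1$, and $\sum_{j\in N(i)\cup\{i\}}x_j>1$ implies $x_i=0$. Then $$p(1-p)\min_{\mathbf{x}\in X}\sum_i x_i\ \le\ \inf_{\mathbf{T}\in\mathcal{N}_{p\cdot\mathbf{1}}}\mathcal{R}(p\cdot\mathbf{1},\mathbf{T})\ \le\ p\log(1/p)\min_{\mathbf{x}\in X}\sum_ix_i.$$
   Context: Public-goods pricing game: $n$ buyers are the vertices of an undirected graph $G=([n],E)$; $N(i)=\{j:(i,j)\in E\}$ (so $i\notin N(i)$). Values i.i.d. uniform on $[0,1]$, $F(x)=\min\{1,x\}$ for $x\ge0$, $F(\infty)=1$. An equilibrium for price vector $\mathbf{p}$ is $\mathbf{T}\in[0,\infty]^n$ (buyer $i$ purchases iff $v_i\ge T_i$) with $T_i=p_i/\prod_{j\in N(i)}F(T_j)$ for all $i$ (convention $c/0=\infty$); $\mathcal{N}_{\mathbf{p}}$ is the set of equilibria; $\mathcal{R}(\mathbf{p},\mathbf{T})=\sum_ip_i(1-F(T_i))$; $p\cdot\mathbf{1}$ is the uniform price vector; $\log$ is the natural logarithm. *)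

From Stdlib Require Import Reals Lra.
Open Scope R_scope.

Fixpoint Rsum (n : nat) (f : nat -> R) : R :=
  match n with O => 0 | S k => Rsum k f + f k end.

Fixpoint Rprod_if (n : nat) (P : nat -> bool) (f : nat -> R) : R :=
  match n with
  | O => 1
  | S k => Rprod_if k P f * (if P k then f k else 1)
  end.

(* Simple undirected graph on vertex set [n] = {0,...,n-1}, given by a
   boolean adjacency relation; N(i) = {j < n | adj i j}. *)
Definition simple_graph (n : nat) (adj : nat -> nat -> bool) : Prop :=
  (forall i j, (i < n)%nat -> (j < n)%nat -> adj i j = adj j i) /\
  (forall i, (i < n)%nat -> adj i i = false).

Inductive ext : Type := Fin (r : R) | Inf.

Definition Fu (r : R) : R := Rmax 0 (Rmin 1 r).
Definition Fext (t : ext) : R :=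
  match t with Fin r => Fu r | Inf => 1 end.

Definition nonneg_ext (t : ext) : Prop :=
  match t with Fin r => 0 <= r | Inf => True end.

(* T is an equilibrium for price vector p: T in [0,inf]^n and
   T_i = p_i / prod_{j in N(i)} F(T_j), with c/0 = infinity. *)
Definition is_equilibrium (n : nat) (adj : nat -> nat -> bool)
    (p : nat -> R) (T : nat -> ext) : Prop :=
  forall i, (i < n)%nat ->
    nonneg_ext (T i) /\
    let d := Rprod_if n (adj i) (fun j => Fext (T j)) in
    ((d = 0 /\ T i = Inf) \/ (d <> 0 /\ T i = Fin (p i / d))).

Definition revenue (n : nat) (p : nat -> R) (T : nat -> ext) : R :=
  Rsum n (fun i => p i * (1 - Fext (T i))).

Definition closed_nbhd_sum (n : nat) (adj : nat -> nat -> bool)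
    (x : nat -> R) (i : nat) : R :=
  Rsum n (fun j => if orb (adj i j) (Nat.eqb j i) then x j else 0).

Definition in_X (n : nat) (adj : nat -> nat -> bool) (x : nat -> R) : Prop :=
  forall i, (i < n)%nat ->
    0 <= x i <= 1 /\
    closed_nbhd_sum n adj x i >= 1 /\
    (closed_nbhd_sum n adj x i > 1 -> x i = 0).

(* Write L = ln p < 0, so that p^t = exp (t L).  The proof rests on a change
   of variables between equilibria and points of X:
   - X is exactly the set of fixed points  x_i = max(0, 1 - N_i(x)),  where
     N_i(x) is the sum of x over the open neighbourhood of i;
   - for every s, F(p^(1-s)) = p^(max(0, 1-s)), and the product over N(i)
     of p^(x_j) is p^(N_i(x)).
   Hence x in X yields the equilibrium T_i = p^(1 - N_i(x)) with F(T_i) = p^(x_i),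
   and conversely every equilibrium T gives x_i = log_p F(T_i) in X.
   In both cases the revenue is  sum_i p (1 - p^(x_i)),  and the elementary
   bounds  (1-p) t <= 1 - p^t <= t ln(1/p)  on [0,1] give the two inequalities.
   The minimum over X is attained because X, cut down to the cube [0,1]^nat,
   is a nonempty (greedy maximal independent sets lie in it) closed subset
   of a compact space on which the objective is continuous. *)

From Stdlib Require Import Reals Lra Lia List.
Open Scope R_scope.

Lemma Rsum_ext n f g : (forall j, (j < n)%nat -> f j = g j) -> Rsum n f = Rsum n g.
Proof.
  induction n as [|n IH]; intros H; simpl; auto.
  rewrite IH by (intros; apply H; lia). rewrite (H n) by lia. reflexivity.
Qed.

Lemma Rsum_le n f g : (forall j, (j < n)%nat -> f j <= g j) -> Rsum n f <= Rsum n g.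
Proof.
  induction n as [|n IH]; intros H; simpl; [lra|].
  assert (Rsum n f <= Rsum n g) by (apply IH; intros; apply H; lia).
  assert (f n <= g n) by (apply H; lia). lra.
Qed.

Lemma Rsum_scal n c f : Rsum n (fun j => c * f j) = c * Rsum n f.
Proof. induction n as [|n IH]; simpl; [ring|]. rewrite IH. ring. Qed.

Lemma Rsum_zero n : Rsum n (fun _ => 0) = 0.
Proof. induction n as [|n IH]; simpl; lra. Qed.

Lemma Rsum_nonneg n f : (forall j, (j < n)%nat -> 0 <= f j) -> 0 <= Rsum n f.
Proof. intros H. rewrite <- (Rsum_zero n). apply Rsum_le. auto. Qed.

Lemma Rsum_ge_term n f l :
  (forall j, (j < n)%nat -> 0 <= f j) -> (l < n)%nat -> f l <= Rsum n f.
Proof.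
  induction n as [|n IH]; intros H Hl; [lia|]. simpl.
  assert (0 <= f n) by (apply H; lia).
  destruct (Nat.eq_dec l n) as [->|Hne].
  - assert (0 <= Rsum n f) by (apply Rsum_nonneg; intros; apply H; lia). lra.
  - assert (f l <= Rsum n f) by (apply IH; [intros; apply H; lia|lia]). lra.
Qed.

Lemma Rprod_ext n P f g :
  (forall j, (j < n)%nat -> f j = g j) -> Rprod_if n P f = Rprod_if n P g.
Proof.
  induction n as [|n IH]; intros H; simpl; auto.
  rewrite IH by (intros; apply H; lia). rewrite (H n) by lia. reflexivity.
Qed.

Lemma Rprod_exp n P g :
  Rprod_if n P (fun j => exp (g j)) = exp (Rsum n (fun j => if P j then g j else 0)).
Proof.
  induction n as [|n IH]; simpl; [now rewrite exp_0|].
  rewrite IH, exp_plus. destruct (P n); [reflexivity|rewrite exp_0; ring].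
Qed.

Lemma Rprod_nonneg n P f : (forall j, (j < n)%nat -> 0 <= f j) -> 0 <= Rprod_if n P f.
Proof.
  induction n as [|n IH]; intros H; simpl; [lra|].
  apply Rmult_le_pos; [apply IH; intros; apply H; lia|].
  destruct (P n); [apply H; lia|lra].
Qed.

Definition nbr_sum (n : nat) (adj : nat -> nat -> bool) (x : nat -> R) (i : nat) : R :=
  Rsum n (fun j => if adj i j then x j else 0).

Lemma closed_nbhd_sum_split n adj x i : adj i i = false -> (i < n)%nat ->
  closed_nbhd_sum n adj x i = x i + nbr_sum n adj x i.
Proof.
  intros Hii Hi. unfold closed_nbhd_sum, nbr_sum.
  assert (Hgen : forall m, Rsum m (fun j => if (adj i j || Nat.eqb j i)%bool then x j else 0)
     = (if Nat.ltb i m then x i else 0) + Rsum m (fun j => if adj i j then x j else 0)).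
  { induction m as [|m IH]; simpl; [destruct (Nat.ltb_spec i 0); [lia|ring]|].
    rewrite IH. destruct (Nat.eqb_spec m i) as [->|Hne].
    - rewrite Hii. destruct (Nat.ltb_spec i i), (Nat.ltb_spec i (S i)); try lia. simpl; ring.
    - rewrite Bool.orb_false_r.
      destruct (Nat.ltb_spec i m), (Nat.ltb_spec i (S m)); try lia; ring. }
  rewrite Hgen. destruct (Nat.ltb_spec i n); [reflexivity|lia].
Qed.

Lemma nbr_sum_nonneg n adj x i :
  (forall j, (j < n)%nat -> 0 <= x j) -> 0 <= nbr_sum n adj x i.
Proof. intros H. apply Rsum_nonneg. intros j Hj. destruct (adj i j); auto; lra. Qed.

Lemma nbr_prod_exp n adj x L i :
  Rprod_if n (adj i) (fun j => exp (x j * L)) = exp (nbr_sum n adj x i * L).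
Proof.
  rewrite Rprod_exp. f_equal. unfold nbr_sum.
  rewrite Rmult_comm, <- Rsum_scal. apply Rsum_ext. intros j _.
  destruct (adj i j); ring.
Qed.

Lemma X_condition_iff t s : 0 <= s ->
  (0 <= t <= 1 /\ t + s >= 1 /\ (t + s > 1 -> t = 0)) <-> t = Rmax 0 (1 - s).
Proof.
  intros Hs. unfold Rmax. destruct (Rle_dec 0 (1 - s)) as [Hle|Hlt]; split.
  - intros [Hb [Hge Hgt]]. destruct (Rlt_or_le 1 (t + s)); [|lra].
    specialize (Hgt H). lra.
  - intros ->. lra.
  - intros [Hb [_ Hgt]]. apply Hgt. lra.
  - intros ->. split; [lra|]. split; intros; lra.
Qed.

Lemma in_X_iff_fixed_point n adj x :
  (forall i, (i < n)%nat -> adj i i = false) ->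
  in_X n adj x <-> forall i, (i < n)%nat -> x i = Rmax 0 (1 - nbr_sum n adj x i).
Proof.
  intros Hirr.
  assert (Hsplit : forall i, (i < n)%nat ->
    closed_nbhd_sum n adj x i = x i + nbr_sum n adj x i)
    by (intros; apply closed_nbhd_sum_split; auto).
  split.
  - intros HX i Hi.
    assert (Hs : 0 <= nbr_sum n adj x i)
      by (apply nbr_sum_nonneg; intros j Hj; apply (HX j Hj)).
    apply (X_condition_iff _ _ Hs). rewrite <- Hsplit by auto. apply HX; auto.
  - intros Hfix.
    assert (Hx0 : forall j, (j < n)%nat -> 0 <= x j)
      by (intros j Hj; rewrite (Hfix j Hj); apply Rmax_l).
    intros i Hi. rewrite Hsplit by auto.
    apply X_condition_iff; [apply nbr_sum_nonneg; auto|auto].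
Qed.

Lemma Fu_exp s L : L < 0 -> Fu (exp ((1 - s) * L)) = exp (Rmax 0 (1 - s) * L).
Proof.
  intros HL. unfold Fu. destruct (Rle_lt_dec s 1) as [Hs|Hs].
  - assert (exp ((1 - s) * L) <= exp 0).
    { destruct (Req_dec s 1) as [->|]; [right; f_equal; ring|].
      left; apply exp_increasing; nra. }
    pose proof (exp_pos ((1 - s) * L)). rewrite exp_0 in *.
    rewrite (Rmax_right 0 (1 - s)), Rmin_right, Rmax_right; lra.
  - assert (exp 0 < exp ((1 - s) * L)) by (apply exp_increasing; nra).
    rewrite exp_0 in *.
    rewrite (Rmax_left 0 (1 - s)), Rmult_0_l, exp_0, Rmin_left, Rmax_right; lra.
Qed.

Lemma div_exp L s : exp L / exp (s * L) = exp ((1 - s) * L).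
Proof. unfold Rdiv. rewrite <- exp_Ropp, <- exp_plus. f_equal. ring. Qed.

(* The convexity (chord) bound  p^t <= 1 - t + t p  for t in [0,1],
   obtained from the tangent bound  ln u <= u - 1  at u = p/m and u = 1/m
   where m = 1 - t + t p. *)
Lemma exp_chord t L : 0 <= t <= 1 -> exp (t * L) <= 1 - t + t * exp L.
Proof.
  intros Ht. set (E := exp L). assert (HE : 0 < E) by apply exp_pos.
  set (m := 1 - t + t * E).
  assert (Hm : 0 < m) by (unfold m; nra).
  assert (Htangent : forall u, 0 < u -> ln u <= u - 1).
  { intros u Hu. pose proof (exp_ineq1_le (ln u)). rewrite exp_ln in H; lra. }
  assert (Hinv : 0 < / m) by (apply Rinv_0_lt_compat; auto).
  assert (H1 := Htangent (E * / m) ltac:(apply Rmult_lt_0_compat; auto)).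
  assert (H2 := Htangent (/ m) Hinv).
  rewrite ln_mult, ln_Rinv in H1 by auto. rewrite ln_Rinv in H2 by auto.
  unfold E in H1 at 1. rewrite ln_exp in H1.
  assert (Hsum : t * (E * / m - 1) + (1 - t) * (/ m - 1) = 0) by (unfold m in *; field; lra).
  assert (t * (L - ln m) <= t * (E * / m - 1)) by (apply Rmult_le_compat_l; lra).
  assert ((1 - t) * (- ln m) <= (1 - t) * (/ m - 1)) by (apply Rmult_le_compat_l; lra).
  assert (Hlog : t * L <= ln m) by lra.
  rewrite <- (exp_ln m) by auto.
  destruct (Req_dec (t * L) (ln m)) as [->|]; [lra|]. left; apply exp_increasing; lra.
Qed.

Lemma one_minus_power_bounds p t : 0 < p < 1 -> 0 <= t <= 1 ->
  (1 - p) * t <= 1 - exp (t * ln p) <= t * ln (/ p).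
Proof.
  intros Hp Ht. rewrite ln_Rinv by lra. split.
  - pose proof (exp_chord t (ln p) Ht). rewrite exp_ln in H; lra.
  - pose proof (exp_ineq1_le (t * ln p)). lra.
Qed.

Lemma revenue_bounds n p x T : 0 < p < 1 ->
  (forall i, (i < n)%nat -> 0 <= x i <= 1) ->
  (forall i, (i < n)%nat -> Fext (T i) = exp (x i * ln p)) ->
  p * (1 - p) * Rsum n x <= revenue n (fun _ => p) T <= p * ln (/ p) * Rsum n x.
Proof.
  intros Hp Hx HT. unfold revenue.
  rewrite !Rmult_assoc, <- !Rsum_scal. split; apply Rsum_le; intros i Hi;
    rewrite HT by auto; apply Rmult_le_compat_l; try lra;
    pose proof (one_minus_power_bounds p (x i) Hp (Hx i Hi)); lra.
Qed.

Section Equilibria.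

Variables (n : nat) (adj : nat -> nat -> bool) (p : R).
Hypothesis Hirr : forall i, (i < n)%nat -> adj i i = false.
Hypothesis Hp : 0 < p < 1.

Let L := ln p.

Let L_neg : L < 0.
Proof. unfold L. rewrite <- ln_1. apply ln_increasing; lra. Qed.

Let exp_L : exp L = p.
Proof. unfold L. apply exp_ln. lra. Qed.

Lemma equilibrium_of_X x : in_X n adj x ->
  is_equilibrium n adj (fun _ => p) (fun j => Fin (exp ((1 - nbr_sum n adj x j) * L))) /\
  forall i, (i < n)%nat ->
    Fext (Fin (exp ((1 - nbr_sum n adj x i) * L))) = exp (x i * L).
Proof.
  intros HX. pose proof HX as Hfix. rewrite in_X_iff_fixed_point in Hfix by auto.
  assert (HF : forall i, (i < n)%nat ->
    Fext (Fin (exp ((1 - nbr_sum n adj x i) * L))) = exp (x i * L))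
    by (intros i Hi; simpl; rewrite Fu_exp, <- Hfix by auto; reflexivity).
  split; auto. intros i Hi. split; [simpl; left; apply exp_pos|].
  simpl. rewrite (Rprod_ext _ _ _ (fun j => exp (x j * L))), nbr_prod_exp by auto.
  right. split; [apply exp_neq_0|]. rewrite <- exp_L at 1. now rewrite div_exp.
Qed.

Lemma equilibrium_F_pos T : is_equilibrium n adj (fun _ => p) T ->
  forall j, (j < n)%nat -> 0 < Fext (T j).
Proof.
  intros HT j Hj. destruct (HT j Hj) as [_ [[_ ->]|[Hd ->]]]; simpl; [lra|].
  assert (0 <= Rprod_if n (adj j) (fun l => Fext (T l))).
  { apply Rprod_nonneg. intros l _. destruct (T l); simpl; [apply Rmax_l|lra]. }
  assert (Hq : 0 < p / Rprod_if n (adj j) (fun l => Fext (T l))).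
  { apply Rdiv_lt_0_compat; lra. }
  unfold Fu. apply Rlt_le_trans with (Rmin 1 (p / Rprod_if n (adj j) (fun l => Fext (T l))));
    [apply Rmin_glb_lt; lra|apply Rmax_r].
Qed.

Lemma X_of_equilibrium T : is_equilibrium n adj (fun _ => p) T ->
  in_X n adj (fun j => ln (Fext (T j)) / L) /\
  forall i, (i < n)%nat -> Fext (T i) = exp (ln (Fext (T i)) / L * L).
Proof.
  intros HT. set (x := fun j => ln (Fext (T j)) / L).
  assert (Hexp : forall j, (j < n)%nat -> Fext (T j) = exp (x j * L)).
  { intros j Hj. unfold x. replace (ln (Fext (T j)) / L * L) with (ln (Fext (T j)))
      by (field; lra). rewrite exp_ln; auto. apply equilibrium_F_pos; auto. }
  split; [|exact Hexp].
  apply in_X_iff_fixed_point; auto. intros i Hi.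
  assert (Hd : Rprod_if n (adj i) (fun j => Fext (T j)) = exp (nbr_sum n adj x i * L))
    by (rewrite (Rprod_ext _ _ _ (fun j => exp (x j * L))), nbr_prod_exp; auto).
  destruct (HT i Hi) as [_ [[Hd0 _]|[_ HTi]]];
    [rewrite Hd in Hd0; destruct (exp_neq_0 _ Hd0)|].
  assert (Hpow : exp (x i * L) = exp (Rmax 0 (1 - nbr_sum n adj x i) * L)).
  { rewrite <- Hexp, HTi by auto. simpl. now rewrite Hd, <- exp_L at 1; rewrite div_exp, Fu_exp. }
  apply exp_inv in Hpow. apply Rmult_eq_reg_r in Hpow; lra.
Qed.

Lemma revenue_upper x : in_X n adj x ->
  exists T, is_equilibrium n adj (fun _ => p) T /\
    revenue n (fun _ => p) T <= p * ln (/ p) * Rsum n x.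
Proof.
  intros HX. destruct (equilibrium_of_X x HX) as [HT HF].
  eexists; split; [exact HT|].
  apply (revenue_bounds n p x); auto. intros i Hi. apply (HX i Hi).
Qed.

Lemma revenue_lower T : is_equilibrium n adj (fun _ => p) T ->
  exists x, in_X n adj x /\ p * (1 - p) * Rsum n x <= revenue n (fun _ => p) T.
Proof.
  intros HT. destruct (X_of_equilibrium T HT) as [HX HF].
  eexists; split; [exact HX|].
  apply (revenue_bounds n p _ T); auto. intros i Hi. apply (HX i Hi).
Qed.

End Equilibria.

(* X is nonempty: the indicator of a maximal independent set belongs to it.
   [greedy adj m] selects, among the vertices below m, each vertex having no
   previously selected neighbour. *)

Fixpoint greedy (adj : nat -> nat -> bool) (m : nat) : nat -> bool :=
  match m with
  | O => fun _ => false
  | S k => fun j =>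
      if Nat.eqb j k then negb (existsb (fun l => andb (adj k l) (greedy adj k l)) (seq 0 k))
      else greedy adj k j
  end.

Definition mis (adj : nat -> nat -> bool) (j : nat) : bool := greedy adj (S j) j.

Lemma greedy_stable adj m j : (j < m)%nat -> greedy adj m j = mis adj j.
Proof.
  induction m as [|m IH]; intros Hj; [lia|]. simpl.
  destruct (Nat.eqb_spec j m) as [->|Hne]; [|apply IH; lia].
  unfold mis. simpl. now rewrite Nat.eqb_refl.
Qed.

Lemma mis_false_iff adj j :
  mis adj j = false <-> exists l, (l < j)%nat /\ adj j l = true /\ mis adj l = true.
Proof.
  unfold mis at 1. simpl. rewrite Nat.eqb_refl, Bool.negb_false_iff, existsb_exists.
  split.
  - intros [l [Hin Hl]]. rewrite in_seq in Hin.
    apply Bool.andb_true_iff in Hl. rewrite greedy_stable in Hl by lia.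
    exists l. split; [lia|exact Hl].
  - intros [l [Hl Hsel]]. exists l. rewrite in_seq, greedy_stable by lia.
    split; [lia|now apply Bool.andb_true_iff].
Qed.

Lemma mis_independent adj j l :
  (l < j)%nat -> adj j l = true -> mis adj j = true -> mis adj l = false.
Proof.
  intros Hl Hadj Hj. destruct (mis adj l) eqn:Hl'; [|reflexivity].
  assert (mis adj j = false) by (apply mis_false_iff; eauto). congruence.
Qed.

Definition mis_indicator (adj : nat -> nat -> bool) (j : nat) : R :=
  if mis adj j then 1 else 0.

Lemma mis_indicator_in_X n adj : simple_graph n adj -> in_X n adj (mis_indicator adj).
Proof.
  intros [Hsym Hirr]. apply in_X_iff_fixed_point; auto. intros i Hi.
  assert (Hnn : forall j, (j < n)%nat -> 0 <= (if adj i j then mis_indicator adj j else 0)).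
  { intros j _. unfold mis_indicator. destruct (adj i j), (mis adj j); lra. }
  unfold mis_indicator at 1. destruct (mis adj i) eqn:Hsel.
  - assert (Hzero : nbr_sum n adj (mis_indicator adj) i = 0).
    { unfold nbr_sum. transitivity (Rsum n (fun _ => 0)); [|apply Rsum_zero].
      apply Rsum_ext. intros j Hj.
      destruct (adj i j) eqn:Hadj; [|reflexivity]. unfold mis_indicator.
      destruct (Nat.lt_total j i) as [Hlt|[->|Hgt]].
      - now rewrite (mis_independent adj i j).
      - now rewrite Hirr in Hadj.
      - destruct (mis adj j) eqn:Hj'; [|reflexivity].
        assert (mis adj i = false) by (apply (mis_independent adj j); auto; rewrite Hsym; auto).
        congruence. }
    rewrite Hzero, Rmax_right; lra.
  - apply mis_false_iff in Hsel. destruct Hsel as [l [Hl [Hadj Hsel']]].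
    assert (1 <= nbr_sum n adj (mis_indicator adj) i).
    { unfold nbr_sum. eapply Rle_trans;
        [|apply (Rsum_ge_term n _ l Hnn); lia].
      rewrite Hadj. unfold mis_indicator. rewrite Hsel'. lra. }
    rewrite Rmax_left; lra.
Qed.

(* X cut down to the cube [0,1]^nat; the implication "sum > 1 -> x_i = 0" is
   written as the equation x_i (sum - 1) = 0 so that the set is visibly closed. *)
Definition X_box (n : nat) (adj : nat -> nat -> bool) (x : nat -> R) : Prop :=
  (forall i, 0 <= x i <= 1) /\
  (forall i, (i < n)%nat -> 1 <= closed_nbhd_sum n adj x i /\
     x i * (closed_nbhd_sum n adj x i - 1) = 0).

Lemma X_box_in_X n adj x : X_box n adj x -> in_X n adj x.
Proof.
  intros [Hb Hc] i Hi. destruct (Hc i Hi) as [H1 H2]. split; [apply Hb|]. split; [lra|].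
  intros Hgt. apply Rmult_integral in H2. destruct H2; [auto|lra].
Qed.

Lemma in_X_X_box n adj x : in_X n adj x -> (forall i, 0 <= x i <= 1) -> X_box n adj x.
Proof.
  intros HX Hb. split; [exact Hb|]. intros i Hi. destruct (HX i Hi) as [_ [H1 H2]].
  split; [lra|]. destruct (Rlt_or_le 1 (closed_nbhd_sum n adj x i)) as [H|H].
  - rewrite (H2 H); ring.
  - replace (closed_nbhd_sum n adj x i - 1) with 0 by lra; ring.
Qed.

Lemma X_box_of_in_X n adj x : in_X n adj x ->
  exists y, X_box n adj y /\ Rsum n y = Rsum n x.
Proof.
  intros HX. set (y := fun j => if Nat.ltb j n then x j else 0).
  assert (Hy : forall j, (j < n)%nat -> y j = x j)
    by (intros j Hj; unfold y; destruct (Nat.ltb_spec j n); [reflexivity|lia]).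
  assert (Hcns : forall i, closed_nbhd_sum n adj y i = closed_nbhd_sum n adj x i)
    by (intros i; apply Rsum_ext; intros j Hj; rewrite Hy; auto).
  exists y. split; [|now apply Rsum_ext]. apply in_X_X_box.
  - intros i Hi. rewrite Hcns, Hy by auto. apply HX; auto.
  - intros i. unfold y. destruct (Nat.ltb_spec i n); [apply (HX i); auto|lra].
Qed.

Lemma mis_indicator_X_box n adj : simple_graph n adj -> X_box n adj (mis_indicator adj).
Proof.
  intros G. apply in_X_X_box; [now apply mis_indicator_in_X|].
  intros i. unfold mis_indicator. destruct (mis adj i); lra.
Qed.

From mathcomp Require all_boot all_order all_algebra all_classical all_reals
  all_analysis Rstruct Rstruct_topology.

Module Compactness.
Import all_boot all_order all_algebra all_classical all_reals all_analysis.
Import Rstruct Rstruct_topology.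
Import Order.TTheory GRing.Theory Num.Theory.
Local Open Scope classical_set_scope.

Lemma coord_continuous (i : nat) : continuous (fun x : {ptws nat -> R} => (x i : R^o)).
Proof. exact: (@proj_continuous nat (fun _ => R) i). Qed.

Lemma Rsum_continuous (n : nat) (F : nat -> {ptws nat -> R} -> R^o) :
  (forall j, continuous (F j)) -> continuous (fun x => (Rsum n (fun j => F j x) : R^o)).
Proof.
move=> HF; elim: n => [|k IH] /=; first exact: cst_continuous.
by move=> x; apply: continuousD (IH x) (HF k x).
Qed.

Lemma closed_nbhd_sum_continuous n adj i :
  continuous (fun x : {ptws nat -> R} => (closed_nbhd_sum n adj x i : R^o)).
Proof.
apply: (Rsum_continuous n (fun j x => if (adj i j || Nat.eqb j i)%bool then x j else 0%R)).
move=> j; case: (adj i j || Nat.eqb j i)%bool; first exact: coord_continuous.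
exact: cst_continuous.
Qed.

Lemma Rsum_attains_min (n : nat) (C : set {ptws nat -> R}) :
  C !=set0 -> (forall x, C x -> forall i, Rle 0 (x i) /\ Rle (x i) 1) -> closed C ->
  exists x, C x /\ forall y, C y -> Rle (Rsum n x) (Rsum n y).
Proof.
move=> C0 Cb Ccl.
have cube : compact [set f : {ptws nat -> R} | forall i, `[0%R, 1%R] (f i)].
  apply: (@tychonoff nat (fun _ => R) (fun _ => `[0%R, 1%R])) => i.
  exact: segment_compact.
have cC : compact C.
  apply: (subclosed_compact Ccl cube) => x Cx i /=.
  have [h1 h2] := Cb x Cx i.
  by rewrite in_itv /=; apply/andP; split; apply/RleP.
have cf : {within C, continuous (fun x : {ptws nat -> R} => (Rsum n x : R^o))}.
  apply: continuous_subspaceT.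
  exact: (Rsum_continuous n (fun j x => x j) coord_continuous).
have [c Cc cmin] := compact_EVT_min C0 cC cf.
exists c; split; first by rewrite inE in Cc.
by move=> y Cy; apply/RleP; apply: cmin; rewrite inE.
Qed.

Lemma closed_preimage_set (f : {ptws nat -> R} -> R^o) (A : set R^o) :
  continuous f -> closed A -> closed [set x | A (f x)].
Proof. by move=> cf; apply: preimage_closed => x _; exact: cf. Qed.

Lemma X_box_closed n adj : closed (X_box n adj : set {ptws nat -> R}).
Proof.
have -> : (X_box n adj : set {ptws nat -> R}) =
  (\bigcap_(i in setT) ([set x | Rle 0 (x i)] `&` [set x | Rle (x i) 1])) `&`
  (\bigcap_(i in [set i | lt i n]) ([set x | Rle 1 (closed_nbhd_sum n adj x i)] `&`
      [set x | Rmult (x i) (Rminus (closed_nbhd_sum n adj x i) 1) = 0])).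
  apply/seteqP; split => x /= [Hb Hc]; split.
  - by move=> i _; have [? ?] := Hb i; split.
  - by move=> i Hi; have [? ?] := Hc i Hi; split.
  - by move=> i; have [? ?] := Hb i I; split.
  - by move=> i Hi; have [? ?] := Hc i Hi; split.
have le_closed (a : R) : closed [set r : R^o | Rle a r].
  by have -> : [set r : R^o | Rle a r] = [set r | (a <= r)%R];
    [apply/seteqP; split => r /= /RleP | exact: closed_ge].
have ge_closed (a : R) : closed [set r : R^o | Rle r a].
  by have -> : [set r : R^o | Rle r a] = [set r | (r <= a)%R];
    [apply/seteqP; split => r /= /RleP | exact: closed_le].
apply: closedI; apply: closed_bigI => i _; apply: closedI.
- exact: closed_preimage_set (coord_continuous i) (le_closed 0%R).
- exact: closed_preimage_set (coord_continuous i) (ge_closed 1%R).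
- exact: closed_preimage_set (closed_nbhd_sum_continuous n adj i) (le_closed 1%R).
- apply: (closed_preimage_set _ [set r : R^o | r = 0%R]); last exact: closed_eq.
  move=> x; apply: continuousM (coord_continuous i x) _.
  exact: continuousB (closed_nbhd_sum_continuous n adj i x) (@cst_continuous _ R^o 1%R x).
Qed.

End Compactness.

Theorem mainTheorem13 (n : nat) (adj : nat -> nat -> bool) (p : R) :
  simple_graph n adj -> 0 < p < 1 ->
  exists x : nat -> R,
    in_X n adj x /\
    (forall y : nat -> R, in_X n adj y -> Rsum n x <= Rsum n y) /\
    (* lower bound: p(1-p) min <= R(p1,T) for every equilibrium T *)
    (forall T : nat -> ext, is_equilibrium n adj (fun _ => p) T ->
       p * (1 - p) * Rsum n x <= revenue n (fun _ => p) T) /\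
    (* upper bound: inf over equilibria <= p log(1/p) min *)
    (forall eps : R, 0 < eps ->
       exists T : nat -> ext, is_equilibrium n adj (fun _ => p) T /\
         revenue n (fun _ => p) T <= p * ln (/ p) * Rsum n x + eps).
Proof.
  intros G Hp. pose proof (proj2 G) as Hirr.
  destruct (Compactness.Rsum_attains_min n (X_box n adj)) as [x [Hx Hmin_box]].
  - exists (mis_indicator adj). now apply mis_indicator_X_box.
  - intros y Hy. apply (proj1 Hy).
  - apply Compactness.X_box_closed.
  - assert (Hmin : forall y, in_X n adj y -> Rsum n x <= Rsum n y).
    { intros y Hy. destruct (X_box_of_in_X n adj y Hy) as [y' [Hy' <-]]. auto. }
    exists x. split; [now apply X_box_in_X|]. split; [exact Hmin|]. split.
    + intros T HT. destruct (revenue_lower n adj p Hirr Hp T HT) as [y [Hy Hrev]].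
      assert (Hscale : p * (1 - p) * Rsum n x <= p * (1 - p) * Rsum n y)
        by (apply Rmult_le_compat_l; [apply Rmult_le_pos|apply Hmin]; auto; lra).
      lra.
    + intros eps Heps.
      destruct (revenue_upper n adj p Hirr Hp x (X_box_in_X n adj x Hx)) as [T [HT Hrev]].
      exists T. split; [exact HT|lra].
Qed.
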